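(* Consider a family, indexed by the number of qubits $n$, of parametrized $n$-qubit states $\widetilde{\rho} = \rho(\vec{\alpha})$ depending on a random variable $\vec{\alpha}$, and a POVM $\mathcal{M} = \{M_k\}_{k=1}^{|\mathcal{M}|}$ with $|\mathcal{M}| \in \mathcal{O}(\operatorname{poly}(n))$. Let $\mathbb{P}_{\vec{\alpha}} = (p_1(\vec{\alpha}), \dots, p_{|\mathcal{M}|}(\vec{\alpha}))$ with $p_k(\vec{\alpha}) = \operatorname{Tr}[\widetilde{\rho} M_k]$ be the outcome distribution. Assume the outcome probabilities exponentially concentrate: there exist $\vec{\alpha}$-independent numbers $\mu_k$ and $\beta \in \mathcal{O}(\exp(-n))$ such that for every $k$ and every $\delta' > 0$, $$\Pr_{\vec{\alpha}}\big(|p_k(\vec{\alpha}) - \mu_k| \geq \delta'\big) \leq \frac{\beta}{\delta'^2},$$ and let $\mathbb{P}_{\rm fixed} = (\mu_1, \dots, \mu_{|\mathcal{M}|})$. Let $N \in \mathcal{O}(\operatorname{poly}(n))$, and suppose a set $\mathcal{S}_N$ of $N$ i.i.d. samples is drawn, with probability $1/2$ each, either from $\mathbb{P}_{\vec{\alpha}}$ (hypothesis $\mathcal{H}_0$) or from $\mathbb{P}_{\rm fixed}$ (hypothesis $\mathcal{H}_1$). Then, with probability at least $1-\delta$ over the choice of $\vec{\alpha}$, where $\delta = |\mathcal{M}|\sqrt{\beta} \in \mathcal{O}(\exp(-n))$, every procedure deciding between $\mathcal{H}_0$ and $\mathcal{H}_1$ from $\mathcal{S}_N$ makes the right decision with probability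 at most $\frac{1}{2} + \varepsilon$, where $\varepsilon = \frac{N|\mathcal{M}|\beta^{1/4}}{4} \in \mathcal{O}(\exp(-n))$. In particular, $\mathbb{P}_{\vec{\alpha}}$ and $\mathbb{P}_{\rm fixed}$ are then statistically indistinguishable with $N$ samples.
   Context: A POVM is a finite set of positive semidefinite operators summing to the identity; measuring it on a state $\rho$ yields outcome $k$ with probability $\operatorname{Tr}[\rho M_k]$. Two distributions $\mathbb{P},\mathbb{P}'$ are called statistically indistinguishable with $N$ samples if, given $N$ i.i.d. samples drawn (with equal prior probability) all from $\mathbb{P}$ or all from $\mathbb{P}'$, no algorithm identifies the correct source with probability greater than $0.51$. Asymptotic notation refers to $n \to \infty$. *)

From HB Require Import structures.
From mathcomp Require Import all_boot all_order all_algebra.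
From mathcomp Require Import all_classical all_reals.
From mathcomp Require Import exp measure lebesgue_measure probability.
From mathcomp Require Import complex.

Set Implicit Arguments.
Unset Strict Implicit.
Unset Printing Implicit Defensive.

Import Order.TTheory GRing.Theory Num.Theory.
Local Open Scope ring_scope.

Section QDefs.
Variable R : realType.
Local Notation C := (R[i]).

Definition adjmx (m n : nat) (A : 'M[C]_(m, n)) : 'M[C]_(n, m) :=
  (map_mx Num.conj A)^T.

Definition psd (d : nat) (A : 'M[C]_d) : Prop :=
  forall v : 'cV[C]_d, 0 <= (adjmx v *m A *m v) 0 0.

Definition density (d : nat) (rho : 'M[C]_d) : Prop :=
  psd rho /\ \tr rho = 1.

Definition povm (d m : nat) (M : 'I_m -> 'M[C]_d) : Prop :=
  (forall k, psd (M k)) /\ \sum_(k < m) M k = 1%:M.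

(* outcome probability Tr[rho M_k] (real, since rho, M_k are psd) *)
Definition outcome_prob (d : nat) (rho M : 'M[C]_d) : R :=
  complex.Re (\tr (rho *m M)).

Definition is_distr (m : nat) (p : 'I_m -> R) : Prop :=
  (forall k, 0 <= p k) /\ \sum_(k < m) p k = 1.

Definition iid_prob (m N : nat) (p : 'I_m -> R) (s : {ffun 'I_N -> 'I_m}) : R :=
  \prod_(i < N) p (s i).

(* A (possibly randomized) decision procedure is f : samples -> [0,1],
   f s = probability of answering H0 on the sample tuple s. *)
Definition success_prob (m N : nat) (p0 p1 : 'I_m -> R)
    (f : {ffun 'I_N -> 'I_m} -> R) : R :=
  2^-1 * (\sum_(s : {ffun 'I_N -> 'I_m}) iid_prob p0 s * f s)
  + 2^-1 * (\sum_(s : {ffun 'I_N -> 'I_m}) iid_prob p1 s * (1 - f s)).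

Definition decision_rule (m N : nat) (f : {ffun 'I_N -> 'I_m} -> R) : Prop :=
  forall s, 0 <= f s <= 1.

End QDefs.

From HB Require Import structures.
From mathcomp Require Import all_boot all_order all_algebra.
From mathcomp Require Import all_classical all_reals.
From mathcomp Require Import exp measure lebesgue_measure probability.
From mathcomp Require Import complex.
From mathcomp Require Import sesquilinear spectral measurable_realfun ring lra.

(* For a fixed parameter, any test succeeds with probability at most
   1/2 + |P^N - Q^N|_1 / 4, and replacing the N samples one at a time (a hybrid
   argument) gives |P^N - Q^N|_1 <= N |P - Q|_1.  If every outcome probability
   is within beta^(1/4) of its mean, |P - Q|_1 <= |M| beta^(1/4).  The
   concentration bound at threshold beta^(1/4) makes each deviation have
   probability at most sqrt beta, so a union bound over the |M| outcomes
   concludes. *)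

Import Order.TTheory GRing.Theory Num.Theory.

Set Implicit Arguments.
Unset Strict Implicit.
Unset Printing Implicit Defensive.

Local Open Scope ring_scope.

Section IidSamples.
Variables (R : realType) (m N : nat).
Implicit Types p q : 'I_m -> R.
Local Notation sample := {ffun 'I_N -> 'I_m}.

Lemma sum_iid_prob p : \sum_(s : sample) iid_prob p s = (\sum_(k < m) p k) ^+ N.
Proof. by rewrite /iid_prob -(bigA_distr_bigA (fun _ k => p k)) prodr_const card_ord. Qed.

Lemma sum_iid_prob_distr p : is_distr p -> \sum_(s : sample) iid_prob p s = 1.
Proof. by case=> _ p1; rewrite sum_iid_prob p1 expr1n. Qed.

Definition hybrid_prob p q (j : nat) (s : sample) : R :=
  \prod_(i < N) (if (i < j)%N then q (s i) else p (s i)).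

Definition hybrid_step p q (j i : 'I_N) (k : 'I_m) : R :=
  if (i < j)%N then q k else if i == j then p k - q k else p k.

Lemma hybrid_probB p q (j : 'I_N) (s : sample) :
  hybrid_prob p q j s - hybrid_prob p q j.+1 s =
    \prod_(i < N) hybrid_step p q j i (s i).
Proof.
have ltnSneq (i : 'I_N) : i != j -> (i < j.+1)%N = (i < j)%N.
  by move=> ij; rewrite ltnS leq_eqVlt -[_ == _]/(i == j) (negbTE ij).
rewrite /hybrid_prob /hybrid_step (bigD1 j) // [X in _ - X](bigD1 j) // [RHS](bigD1 j) //=.
rewrite ltnn eqxx ltnSn mulrBl.
by congr (_ * _ - _ * _); apply: eq_bigr => i ij; rewrite ?ltnSneq // (negbTE ij).
Qed.

Lemma iid_probB_telescope p q (s : sample) :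
  iid_prob p s - iid_prob q s = \sum_(j < N) \prod_(i < N) hybrid_step p q j i (s i).
Proof.
have -> : iid_prob p s = hybrid_prob p q 0 s by [].
have -> : iid_prob q s = hybrid_prob p q N s.
  by apply: eq_bigr => i _; rewrite ltn_ord.
rewrite -opprB -(telescope_sumr (fun j => hybrid_prob p q j s) (leq0n N)) -sumrN.
by rewrite big_mkord; apply: eq_bigr => j _; rewrite opprB hybrid_probB.
Qed.

Lemma sum_hybrid_step_norm p q (j : 'I_N) : is_distr p -> is_distr q ->
  \sum_(s : sample) \prod_(i < N) `|hybrid_step p q j i (s i)| =
    \sum_(k < m) `|p k - q k|.
Proof.
move=> [p0 p1] [q0 q1].
rewrite -(bigA_distr_bigA (fun i k => `|hybrid_step p q j i k|)) (bigD1 j) //=.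
rewrite [X in _ * X]big1 ?mulr1 => [|i ij].
  by apply: eq_bigr => k _; rewrite /hybrid_step ltnn eqxx.
rewrite /hybrid_step (negbTE ij); case: (i < j)%N.
  by rewrite -q1; apply: eq_bigr => k _; rewrite ger0_norm.
by rewrite -p1; apply: eq_bigr => k _; rewrite ger0_norm.
Qed.

Lemma sum_iid_probB_norm p q : is_distr p -> is_distr q ->
  \sum_(s : sample) `|iid_prob p s - iid_prob q s| <=
    N%:R * \sum_(k < m) `|p k - q k|.
Proof.
move=> hp hq; apply: le_trans
  (_ : _ <= \sum_(s : sample) \sum_(j < N) \prod_(i < N) `|hybrid_step p q j i (s i)|) _.
  apply: ler_sum => s _; rewrite iid_probB_telescope.
  by apply: le_trans (ler_norm_sum _ _ _) _; apply: ler_sum => j _; rewrite normr_prod.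
rewrite exchange_big /= (eq_bigr _ (fun j _ => sum_hybrid_step_norm j hp hq)).
by rewrite sumr_const card_ord mulr_natl.
Qed.

Lemma success_probE p q (f : sample -> R) : is_distr p -> is_distr q ->
  success_prob p q f =
    2^-1 + 2^-1 * \sum_(s : sample) (iid_prob p s - iid_prob q s) * (f s - 2^-1).
Proof.
move=> hp hq; rewrite /success_prob.
have -> : \sum_(s : sample) (iid_prob p s - iid_prob q s) * (f s - 2^-1) =
    \sum_(s : sample) iid_prob p s * f s - \sum_(s : sample) iid_prob q s * f s
    - 2^-1 * \sum_(s : sample) (iid_prob p s - iid_prob q s).
  by rewrite mulr_sumr -!sumrB; apply: eq_bigr => s _; ring.
have -> : \sum_(s : sample) iid_prob q s * (1 - f s) =
    \sum_(s : sample) iid_prob q s - \sum_(s : sample) iid_prob q s * f s.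
  by rewrite -sumrB; apply: eq_bigr => s _; ring.
rewrite sumrB !sum_iid_prob_distr //; ring.
Qed.

Lemma success_prob_le_sum_norm p q (f : sample -> R) :
    is_distr p -> is_distr q -> decision_rule f ->
  success_prob p q f <= 2^-1 + 4^-1 * \sum_(s : sample) `|iid_prob p s - iid_prob q s|.
Proof.
move=> hp hq hf; rewrite success_probE // lerD2l.
have -> : 4^-1 = 2^-1 * 2^-1 :> R by rewrite -invfM -natrM.
rewrite -mulrA ler_pM2l ?invr_gt0 // mulr_sumr; apply: ler_sum => s _.
apply: le_trans (ler_norm _) _; rewrite normrM mulrC ler_wpM2r //.
by have /andP[f0 f1] := hf s; rewrite ler_norml; apply/andP; split; lra.
Qed.

Lemma success_prob_le p q (f : sample -> R) t :
    is_distr p -> is_distr q -> decision_rule f -> (forall k, `|p k - q k| <= t) ->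
  success_prob p q f <= 2^-1 + N%:R * m%:R * t / 4.
Proof.
move=> hp hq hf ht; apply: le_trans (success_prob_le_sum_norm hp hq hf) _.
have sum_le : \sum_(k < m) `|p k - q k| <= m%:R * t.
  apply: le_trans (ler_sum _ (fun k _ => ht k)) _.
  by rewrite sumr_const card_ord mulr_natl.
have := sum_iid_probB_norm hp hq; have := ler_wpM2l (ler0n R N) sum_le; lra.
Qed.

End IidSamples.

Section PsdMatrices.
Variable R : realType.
Local Notation C := R[i].

Lemma adjmxE p q (A : 'M[C]_(p, q)) : adjmx A = (A ^t* )%sesqui.
Proof. by apply/matrixP => i j; rewrite !mxE. Qed.

Lemma adjmxD p q (A B : 'M[C]_(p, q)) : adjmx (A + B) = adjmx A + adjmx B.
Proof. by apply/matrixP => i j; rewrite !mxE rmorphD. Qed.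

Lemma adjmxZ p q (c : C) (A : 'M[C]_(p, q)) : adjmx (c *: A) = c^* *: adjmx A.
Proof. by apply/matrixP => i j; rewrite !mxE rmorphM. Qed.

Lemma adjmxK p q (A : 'M[C]_(p, q)) : adjmx (adjmx A) = A.
Proof. by apply/matrixP => i j; rewrite !mxE conjCK. Qed.

Lemma adjmx_row d (A : 'M[C]_d) i : adjmx (row i A) = col i (adjmx A).
Proof. by apply/matrixP => a b; rewrite !mxE. Qed.

Lemma adjmx_delta d (i : 'I_d) : adjmx (delta_mx i 0 : 'cV[C]_d) = delta_mx 0 i.
Proof.
apply/matrixP => a b; rewrite !mxE.
by case: (a == 0) (b == i) => [] [] /=; rewrite ?rmorph1 ?rmorph0.
Qed.

Variable d : nat.
Implicit Types A B : 'M[C]_d.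

Definition sesqform A (u v : 'cV[C]_d) : C := (adjmx u *m A *m v) 0 0.

Lemma sesqformDl A u u' v : sesqform A (u + u') v = sesqform A u v + sesqform A u' v.
Proof. by rewrite /sesqform adjmxD !mulmxDl mxE. Qed.

Lemma sesqformDr A u v v' : sesqform A u (v + v') = sesqform A u v + sesqform A u v'.
Proof. by rewrite /sesqform !mulmxDr mxE. Qed.

Lemma sesqformZl A c u v : sesqform A (c *: u) v = c^* * sesqform A u v.
Proof. by rewrite /sesqform adjmxZ -!scalemxAl mxE. Qed.

Lemma sesqformZr A c u v : sesqform A u (c *: v) = c * sesqform A u v.
Proof. by rewrite /sesqform -!scalemxAr mxE. Qed.

Lemma sesqform_delta A i j : sesqform A (delta_mx i 0) (delta_mx j 0) = A i j.
Proof. by rewrite /sesqform adjmx_delta -rowE -colE !mxE. Qed.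

Lemma psd_sesqform_real A v : psd A -> (sesqform A v v)^* = sesqform A v v.
Proof. by move=> psdA; rewrite geC0_conj //; exact: psdA. Qed.

(* Polarization: the forms at [u + v] and [u + 'i v] are real. *)
Lemma psd_sesqform_conj A u v : psd A -> sesqform A v u = (sesqform A u v)^*.
Proof.
move=> psdA.
set a := sesqform A u u; set b := sesqform A v v.
set x := sesqform A u v; set y := sesqform A v u.
have ra : a^* = a by exact: psd_sesqform_real.
have rb : b^* = b by exact: psd_sesqform_real.
have := psd_sesqform_real (u + v) psdA.
rewrite !sesqformDl !sesqformDr -/a -/b -/x -/y !rmorphD /= ra rb.
have := psd_sesqform_real (u + 'i *: v) psdA.
rewrite !sesqformDl !sesqformDr !sesqformZl !sesqformZr conjCi -/a -/b -/x -/y.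
rewrite !(rmorphD, rmorphN, rmorphM) /= ra rb conjCi.
move=> /eqP; rewrite -subr_eq0 => /eqP eq_i /eqP; rewrite -subr_eq0 => /eqP eq_1.
have ii : 1 + 'i * 'i = 0 :> C by rewrite mulCii subrr.
have : (y - x^*) * 2 = - 'i * 0 - 0 + 0 * (y^* - x^* + y - x).
  by rewrite -{3}ii -{2}eq_1 -eq_i; ring.
rewrite mul0r mulr0 !subr0 addr0 => /eqP; rewrite mulf_eq0 pnatr_eq0 orbF subr_eq0.
by move/eqP.
Qed.

Lemma psd_adjmx A : psd A -> adjmx A = A.
Proof.
move=> psdA; apply/matrixP => i j; rewrite !mxE.
by rewrite -!sesqform_delta psd_sesqform_conj ?conjCK.
Qed.

Lemma psd_conj_diag_ge0 A (P : 'M[C]_d) i : psd A -> 0 <= (P *m A *m adjmx P) i i.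
Proof.
move=> psdA; have := psdA (adjmx (row i P)); rewrite adjmxK adjmx_row.
suff -> : (P *m A *m adjmx P) i i = (row i P *m A *m col i (adjmx P)) 0 0 by [].
by rewrite -row_mul !mxE; apply: eq_bigr => k _; rewrite !mxE.
Qed.

(* Diagonalizing [A] by a unitary [P] turns [\tr (A B)] into a sum of products
   of eigenvalues of [A] with diagonal entries of [P B P^*]. *)
Lemma mxtrace_psdM_ge0 A B : psd A -> psd B -> 0 <= \tr (A *m B).
Proof.
move=> psdA psdB.
have normalA : A \is normalmx by apply/normalmxP; rewrite -adjmxE psd_adjmx.
have /orthomx_spectralP := normalA.
set P := spectralmx A; set D := spectral_diag A.
have unitaryP : P \is unitarymx := spectral_unitarymx A.
have PP : P *m adjmx P = 1%:M by rewrite adjmxE; exact/unitarymxP.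
rewrite invmx_unitary // -adjmxE => eqA.
have D_ge0 i : 0 <= D 0 i.
  have := psd_conj_diag_ge0 P i psdA.
  by rewrite eqA !mulmxA PP mul1mx -mulmxA PP mulmx1 mxE eqxx mulr1n.
rewrite eqA -!mulmxA mxtrace_mulC -!mulmxA mul_diag_mx /mxtrace.
apply: sumr_ge0 => i _; rewrite !mxE; apply: mulr_ge0; first exact: D_ge0.
by have := psd_conj_diag_ge0 P i psdB; rewrite -mulmxA mxE.
Qed.

End PsdMatrices.

Lemma outcome_prob_distr (R : realType) d m
    (rho : 'M[R[i]]_d) (M : 'I_m -> 'M[R[i]]_d) :
  density rho -> povm M -> is_distr (fun k => outcome_prob rho (M k)).
Proof.
move=> [psd_rho tr_rho] [psdM sumM]; split => [k|].
  by have := mxtrace_psdM_ge0 psd_rho (psdM k); rewrite lecE => /andP[].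
have ReD : {morph @complex.Re R : x y / x + y} by case=> ? ? [].
rewrite /outcome_prob -(big_morph _ ReD (erefl : complex.Re 0 = 0)) -raddf_sum /=.
by rewrite -mulmx_sumr sumM mulmx1 tr_rho.
Qed.

Local Open Scope classical_set_scope.

Lemma measure_bigsetU_le d (T : ringOfSetsType d) (R : realFieldType)
    (mu : {content set T -> \bar R}) (I : Type) (r : seq I) (F : I -> set T) :
  (forall i, measurable (F i)) ->
  (mu (\big[setU/set0]_(i <- r) F i) <= \sum_(i <- r) mu (F i))%E.
Proof.
move=> mF; elim: r => [|i r IHr]; first by rewrite !big_nil measure0.
rewrite !big_cons; apply: le_trans (measureU2 _ _ _) _ => //.
  exact: bigsetU_measurable.
exact: leeD2l.
Qed.

Section RealTail.
Variables (d : measure_display) (T : measurableType d) (R : realType).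
Variable mu : {measure set T -> \bar R}.
Variable g : T -> R.
Hypothesis mg : measurable_fun setT g.

Lemma measurable_set_gt c : measurable [set a | c < g a].
Proof. by rewrite -preimage_itvoy -[X in measurable X]setTI; exact: mg. Qed.

Lemma measurable_set_ge c : measurable [set a | c <= g a].
Proof. by rewrite -preimage_itvcy -[X in measurable X]setTI; exact: mg. Qed.

Lemma measure_gt0_eq0 :
  (forall e : R, 0 < e -> mu [set a | e <= g a] = 0%E) -> mu [set a | 0 < g a] = 0%E.
Proof.
move=> null_tails; apply: measure_negligible; first exact: measurable_set_gt.
apply: (@negligibleS _ _ _ _ (\bigcup_n [set a | n.+1%:R^-1 <= g a])).
  move=> a /= ga_gt0; exists (Num.truncn (g a)^-1) => //=.
  rewrite invf_ple ?posrE ?ltr0n //; apply: ltW; apply: real_truncnS_gt.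
  by rewrite realE ltW // invr_gt0.
apply: negligible_bigcup => n; apply/negligibleP; first exact: measurable_set_ge.
by apply: null_tails; rewrite invr_gt0 ltr0n.
Qed.

Lemma tail_le_sqrt (beta : R) : 0 <= beta ->
    (forall e : R, 0 < e -> (mu [set a | (e <= g a)%R] <= (beta / e ^+ 2)%:E)%E) ->
  (mu [set a | (powR beta 4^-1 < g a)%R] <= (Num.sqrt beta)%:E)%E.
Proof.
rewrite le_eqVlt => /orP[/eqP <-|beta_gt0] tails.
  rewrite powR0 ?invr_eq0 ?pnatr_eq0 // sqrtr0 measure_gt0_eq0 // => e e_gt0.
  by apply/eqP; rewrite eq_le measure_ge0 andbT; have := tails e e_gt0; rewrite mul0r.
set t := powR beta 4^-1.
have t_gt0 : 0 < t := powR_gt0 _ beta_gt0.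
have sqr_t : t ^+ 2 = Num.sqrt beta.
  rewrite -powR_mulrn ?powR_ge0 // -powRrM -powR12_sqrt ?ltW //.
  by congr powR; field.
apply: le_trans (_ : _ <= mu [set a | (t <= g a)%R])%E _.
  apply: le_measure; rewrite ?inE; [exact: measurable_set_gt|exact: measurable_set_ge|].
  by move=> a /ltW.
apply: le_trans (tails t t_gt0) _.
have sqrt_gt0 : 0 < Num.sqrt beta by rewrite sqrtr_gt0.
by rewrite lee_fin sqr_t -{1}(sqr_sqrtr (ltW beta_gt0)) expr2 mulfK // gt_eqF.
Qed.

End RealTail.

Theorem theorem2 (R : realType) (dT : measure_display) (T : measurableType dT)
    (P : probability T R) (n m N : nat)
    (rho : T -> 'M[R[i]]_(2 ^ n)) (M : 'I_m -> 'M[R[i]]_(2 ^ n))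
    (mu : 'I_m -> R) (beta : R) :
  (forall a, density (rho a)) ->
  povm M ->
  is_distr mu ->
  (forall k, measurable_fun setT (fun a => outcome_prob (rho a) (M k))) ->
  0 <= beta ->
  (forall (k : 'I_m) (d' : R), 0 < d' ->
     (P [set a | (d' <= `|outcome_prob (rho a) (M k) - mu k|)%R]
       <= (beta / d' ^+ 2)%:E)%E) ->
  exists G : set T,
    [/\ measurable G,
        ((1 - m%:R * Num.sqrt beta)%:E <= P G)%E &
        forall a, G a ->
          forall f : {ffun 'I_N -> 'I_m} -> R, decision_rule f ->
            success_prob (fun k => outcome_prob (rho a) (M k)) mu f
              <= 2^-1 + N%:R * m%:R * powR beta 4^-1 / 4].
Proof.
move=> density_rho povmM distr_mu mprob beta_ge0 tails.
pose dev k a := `|outcome_prob (rho a) (M k) - mu k|.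
have mdev k : measurable_fun setT (dev k).
  by apply: measurableT_comp => //; apply: measurable_funB.
pose bad := \big[setU/set0]_(k < m) [set a | powR beta 4^-1 < dev k a].
have mbad : measurable bad.
  by apply: bigsetU_measurable => k _; exact: measurable_set_gt.
have Pbad : (P bad <= (m%:R * Num.sqrt beta)%:E)%E.
  apply: le_trans (measure_bigsetU_le P _ _) _ => [k|].
    exact: measurable_set_gt.
  apply: le_trans (lee_sum _ (fun k _ => tail_le_sqrt (mdev k) beta_ge0 (tails k))) _.
  by rewrite sumEFin sumr_const card_ord mulr_natl.
exists (~` bad); split.
- exact: measurableC.
- by rewrite probability_setC // EFinB leeB.
- move=> a good f decf; apply: success_prob_le => //.
    exact: outcome_prob_distr (density_rho a) povmM.
  move=> k; rewrite leNgt; apply/negP => dev_gt; apply: good.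
  by rewrite /bad (bigD1 k) //; left.
Qed.
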